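(* For every pairwise spanner instance on a directed graph with uniform edge lengths and $k$ terminal pairs, there exists a junction tree solution whose cost is $O(\sqrt{k})\cdot\mathsf{OPT}$.
   Context: Pairwise spanner problem: given a directed graph $G=(V,E)$ with $\ell(e)=1$ for all $e$, terminal pairs $(s_i,t_i)$, $i\in[k]$, and target distances $d_i$ with $d_G(s_i,t_i)\le d_i$, find $F\subseteq E$ of minimum cardinality such that $(V,F)$ contains an $s_i\leadsto t_i$ path with at most $d_i$ edges for every $i$; $\mathsf{OPT}$ is this minimum. A junction tree rooted at $r\in V$ is a subgraph $J$ of $G$ that is the union of an in-arborescence $A^{in}$ rooted at $r$ and an out-arborescence $A^{out}$ rooted at $r$. A terminal pair $(s_i,t_i)$ is connected by $J$ if $s_i\in A^{in}$, $t_i\in A^{out}$, and the $s_i\leadsto r$ path in $A^{in}$ plus the $r\leadsto t_i$ path in $A^{out}$ have at most $d_i$ edges in total. A junction tree solution is a finite collection of junction trees (possibly with different roots) such that every terminal pair is connected by at least one of them; its cost is $\sum_J|E(J)|$, i.e., edges belonging to several junction trees are counted with multiplicity. *)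

From Stdlib Require Export Reals.
From mathcomp Require Import all_boot.
Set Implicit Arguments. Unset Strict Implicit. Unset Printing Implicit Defensive.

Section Defs.
Variable V : finType.

(* A directed graph is an edge set E : {set V * V}; (u,v) is the edge u -> v.
   All edge lengths are 1, so path length = number of edges. *)
Definition erel (F : {set V * V}) : rel V := fun a b => (a, b) \in F.

Definition walk_le (F : {set V * V}) (x y : V) (n : nat) : Prop :=
  exists p : seq V, [/\ path (erel F) x p, last x p = y & size p <= n].

Definition spanner_feasible (E : {set V * V}) (k : nat)
  (s t : 'I_k -> V) (d : 'I_k -> nat) (F : {set V * V}) : Prop :=
  F \subset E /\ forall i, walk_le F (s i) (t i) (d i).

Definition verts (A : {set V * V}) (r : V) : {set V} :=
  r |: ([set e.1 | e in A] :|: [set e.2 | e in A]).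

Definition out_arborescence (A : {set V * V}) (r : V) : Prop :=
  [/\ forall e, e \in A -> e.2 != r,
      forall v, v \in verts A r -> v != r -> #|[set e in A | e.2 == v]| = 1
    & forall v, v \in verts A r -> exists n, walk_le A r v n].

Definition rev_edges (A : {set V * V}) : {set V * V} :=
  [set (e.2, e.1) | e in A].

Definition in_arborescence (A : {set V * V}) (r : V) : Prop :=
  out_arborescence (rev_edges A) r.

Record jtree := JTree { jroot : V; jin : {set V * V}; jout : {set V * V} }.

Definition is_junction_tree (E : {set V * V}) (J : jtree) : Prop :=
  [/\ jin J \subset E, jout J \subset E,
      in_arborescence (jin J) (jroot J) & out_arborescence (jout J) (jroot J)].

(* J connects (s,t) within distance d: s in A_in, t in A_out, and the
   s ~> r path in A_in plus the r ~> t path in A_out have <= d edges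
   (arborescences are acyclic, so these walks are the unique tree paths) *)
Definition jconnects (J : jtree) (s t : V) (d : nat) : Prop :=
  [/\ s \in verts (jin J) (jroot J), t \in verts (jout J) (jroot J) &
      exists a b, [/\ walk_le (jin J) s (jroot J) a,
                      walk_le (jout J) (jroot J) t b & a + b <= d]].

(* cost of a junction tree solution: edges counted with multiplicity over trees *)
Definition jcost (sol : seq jtree) : nat :=
  \sum_(J <- sol) #|jin J :|: jout J|.

Definition junction_solution (E : {set V * V}) (k : nat)
  (s t : 'I_k -> V) (d : 'I_k -> nat) (sol : seq jtree) : Prop :=
  (forall J, List.In J sol -> is_junction_tree E J) /\
  (forall i, exists J, List.In J sol /\ jconnects J (s i) (t i) (d i)).

End Defs.

(* Let F be a feasible spanner and fix, for each pair i, a duplicate-free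
   walk P i in F from s i to t i of length at most d i; let q = ceil(sqrt k).
   - For any root r and edge set G, shortest-walk in/out trees inside G form
     one junction tree of cost <= |G| connecting every pair x, y with walks
     x ~> r and r ~> y in G of total length <= d (junction_tree_at).
   - Greedy cover: while some vertex v lies on >= q of the remaining walks,
     the junction tree at v inside F serves all of them at cost |F|, i.e.
     |F|/q per pair; this costs at most k |F| / q in total.  When every
     vertex lies on < q remaining walks, each remaining pair is served by
     the tree of its own walk, and double counting over the heads of edges
     of F bounds the total length by q |F| (light_cover, greedy_cover).
   - Hence cost <= 2 q |F| <= 4 sqrt(k) |F|, which gives the theorem with
     C = 4. *)
From Stdlib Require Import Reals Classical Lra.
From mathcomp Require Import all_boot zify.
Set Implicit Arguments. Unset Strict Implicit. Unset Printing Implicit Defensive.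

Lemma walk_nil (V : finType) (G : {set V * V}) x n : walk_le G x x n.
Proof. by exists [::]. Qed.

Lemma walk_cons (V : finType) (G : {set V * V}) x z y n :
  (x, z) \in G -> walk_le G z y n -> walk_le G x y n.+1.
Proof. by move=> xz [p [pp lp sp]]; exists (z :: p); split => //=; rewrite /erel xz. Qed.

Lemma walk_snoc (V : finType) (G : {set V * V}) x y z n :
  walk_le G x y n -> (y, z) \in G -> walk_le G x z n.+1.
Proof.
move=> [p [pp lp sp]] yz; exists (rcons p z).
by rewrite rcons_path pp lp /erel yz last_rcons size_rcons.
Qed.

Lemma walk_mono (V : finType) (G : {set V * V}) x y n m :
  n <= m -> walk_le G x y n -> walk_le G x y m.
Proof. by move=> nm [p [pp lp sp]]; exists p; split => //; apply: leq_trans nm. Qed.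

Lemma path_sub (V : finType) (G H : {set V * V}) x p :
  G \subset H -> path (erel G) x p -> path (erel H) x p.
Proof.
move=> /subsetP GH; elim: p x => [|z p IH] x //= /andP[xz pz].
by rewrite /erel (GH _ xz) IH.
Qed.

Lemma walk_uniq (V : finType) (G : {set V * V}) x y n :
  walk_le G x y n ->
  exists p, [/\ path (erel G) x p, last x p = y, size p <= n & uniq p].
Proof.
move=> [p [pp lp sp]]; move: lp; case: (shortenP pp) => p' pp' /andP[_ up'] sub' lp.
by exists p'; split => //; apply: leq_trans sp; apply: uniq_leq_size sub'.
Qed.

Lemma walk_split (V : finType) (G : {set V * V}) x p v :
  path (erel G) x p -> v \in p ->
  exists a b, [/\ walk_le G x v a, walk_le G v (last x p) b & a + b = size p].
Proof.
elim: p x => [|z p IH] x //= /andP[xz pz]; rewrite inE => /orP[/eqP->|vp].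
  exists 1, (size p); split; [exact: walk_cons xz (walk_nil _ _ _) | by exists p | by []].
have [a [b [wa wb ab]]] := IH z pz vp.
by exists a.+1, b; split; [exact: walk_cons xz wa | done | rewrite addSn ab].
Qed.

Lemma path_heads (V : finType) (G : {set V * V}) x p :
  path (erel G) x p -> {subset p <= [set e.2 | e in G]}.
Proof.
elim: p x => [|z p IH] x //= /andP[xz pz] v; rewrite inE => /orP[/eqP->|vp].
  by apply/imsetP; exists (x, z).
exact: IH pz v vp.
Qed.

(* Edge reversal turns x ~> y walks into y ~> x walks and preserves the
   vertex set of an arborescence; it lets out-trees be built from in-trees. *)
Lemma mem_rev_edges (V : finType) (A : {set V * V}) e :
  (e \in rev_edges A) = ((e.2, e.1) \in A).
Proof.
apply/imsetP/idP => [[f fA ->] | eA] /=; first by case: f fA.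
by exists (e.2, e.1) => //; case: e eA.
Qed.

Lemma walk_rev (V : finType) (G : {set V * V}) x y n :
  walk_le G x y n -> walk_le (rev_edges G) y x n.
Proof.
move=> [p [pp <- sp]]; apply: (walk_mono sp).
elim: p x pp {sp} => [|z p IH] x /=; first by move=> _; exact: walk_nil.
by move=> /andP[xz pz]; apply: walk_snoc (IH _ pz) _; rewrite mem_rev_edges.
Qed.

Lemma verts_rev (V : finType) (A : {set V * V}) r v :
  (v \in verts (rev_edges A) r) = (v \in verts A r).
Proof.
rewrite /verts !inE; congr (_ || _).
apply/orP/orP => -[/imsetP[e eA ->]|/imsetP[e eA ->]].
- by right; apply/imsetP; exists (e.2, e.1) => //; rewrite -mem_rev_edges.
- by left; apply/imsetP; exists (e.2, e.1) => //; rewrite -mem_rev_edges.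
- by right; apply/imsetP; exists (e.2, e.1) => //; rewrite mem_rev_edges; case: e eA.
- by left; apply/imsetP; exists (e.2, e.1) => //; rewrite mem_rev_edges; case: e eA.
Qed.

(* Boolean reflection of bounded walks, so that minimal walk lengths exist. *)
Fixpoint walk_leb (V : finType) (G : {set V * V}) (n : nat) (x y : V) : bool :=
  if n is m.+1 then (x == y) || [exists z, ((x, z) \in G) && walk_leb G m z y]
  else x == y.

Lemma walk_lebP (V : finType) (G : {set V * V}) n x y :
  reflect (walk_le G x y n) (walk_leb G n x y).
Proof.
elim: n x => [|n IH] x /=.
  apply: (iffP eqP) => [->|[p [pp lp sp]]]; first exact: walk_nil.
  by case: p pp lp sp.
apply: (iffP orP) => [[/eqP->|/existsP[z /andP[xz /IH wz]]]|[p [pp lp sp]]].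
- exact: walk_nil.
- exact: walk_cons xz wz.
- case: p pp lp sp => [|z p] /=; first by move=> _ ->; left.
  move=> /andP[xz pz] lp sp; right; apply/existsP; exists z.
  by rewrite -/(erel G x z) xz; apply/IH; exists p.
Qed.

Lemma distance_to (V : finType) (G : {set V * V}) (r : V) :
  exists (reach : V -> bool) (dist : V -> nat),
    [/\ forall x, reach x <-> exists n, walk_le G x r n,
        forall x, reach x -> walk_le G x r (dist x)
      & forall x n, walk_le G x r n -> dist x <= n].
Proof.
have pick_dist x : exists p : bool * nat,
    (p.1 <-> exists n, walk_le G x r n) /\
    (forall n, walk_le G x r n -> walk_le G x r p.2 /\ p.2 <= n).
  case: (classic (exists n, walk_le G x r n)) => [ex|nex]; last first.
    by exists (false, 0); split => // n wn; case: nex; exists n.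
  have exb : exists n, walk_leb G n x r by case: ex => n /walk_lebP; exists n.
  exists (true, ex_minn exb); case: ex_minnP => m /walk_lebP hm hmin /=.
  by split => // n /walk_lebP /hmin.
have [f hf] := fin_all_exists pick_dist.
exists (fun x => (f x).1), (fun x => (f x).2); split => x.
- exact: (hf x).1.
- by move=> /(hf x).1 [n /((hf x).2 n) []].
- by move=> n /((hf x).2 n) [].
Qed.

(* Shortest-walk trees: pointing every reachable vertex to a neighbour one
   step closer to r yields an in-arborescence rooted at r that preserves all
   distances to r. *)
Section ShortestWalkTree.
Variables (V : finType) (G : {set V * V}) (r : V).
Variables (reach : V -> bool) (dist : V -> nat).
Hypothesis reachP : forall x, reach x <-> exists n, walk_le G x r n.
Hypothesis dist_walk : forall x, reach x -> walk_le G x r (dist x).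
Hypothesis dist_min : forall x n, walk_le G x r n -> dist x <= n.

Definition parent (x : V) : V :=
  odflt r [pick z | [&& (x, z) \in G, reach z & dist z < dist x]].

Lemma parentP x : reach x -> x != r ->
  [&& (x, parent x) \in G, reach (parent x) & dist (parent x) < dist x].
Proof.
move=> rx xr; rewrite /parent; case: pickP => [z -> //|none]; exfalso.
have [[|z p] [pp lp sp]] := dist_walk rx; first by move: lp xr => /= ->; rewrite eqxx.
move: pp lp sp => /= /andP[xz pz] lp sp.
have wz : walk_le G z r (size p) by exists p.
have rz : reach z by apply/reachP; exists (size p).
have := none z; rewrite -/(erel G x z) xz rz /=.
by rewrite (leq_ltn_trans (dist_min wz) sp).
Qed.

Definition tree_edges : {set V * V} :=
  [set e : V * V | [&& reach e.1, e.1 != r & e.2 == parent e.1]].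

Lemma tree_edges_sub : tree_edges \subset G.
Proof.
apply/subsetP => -[a b]; rewrite inE /= => /and3P[ra ar /eqP ->].
by case/and3P: (parentP ra ar).
Qed.

Lemma tree_walk x : reach x -> walk_le tree_edges x r (dist x).
Proof.
have [m] := ubnP (dist x); elim: m x => // m IH x dx rx.
have [->|xr] := eqVneq x r; first exact: walk_nil.
have /and3P[_ rp dp] := parentP rx xr.
apply: (walk_mono dp); apply: walk_cons (IH _ (leq_trans dp dx) rp).
by rewrite inE /= rx xr eqxx.
Qed.

Lemma tree_verts_reach v : v \in verts tree_edges r -> v != r -> reach v.
Proof.
rewrite /verts !inE => /orP[/eqP->|]; first by rewrite eqxx.
move=> /orP[|] /imsetP[e] /[!inE] /and3P[re er /eqP e2] -> // _.
by rewrite e2; case/and3P: (parentP re er).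
Qed.

Lemma tree_in_arborescence : in_arborescence tree_edges r.
Proof.
split.
- by move=> e; rewrite mem_rev_edges inE /= => /and3P[].
- move=> v; rewrite verts_rev => vV vr; have rv := tree_verts_reach vV vr.
  suff -> : [set e in rev_edges tree_edges | e.2 == v] = [set (parent v, v)].
    by rewrite cards1.
  apply/setP => -[a b]; rewrite !inE mem_rev_edges inE /= xpair_eqE.
  apply/idP/idP => [/andP[/and3P[_ _ /eqP->] /eqP->]|/andP[/eqP-> /eqP->]].
    by rewrite !eqxx.
  by rewrite rv vr !eqxx.
- move=> v; rewrite verts_rev => vV.
  have [->|vr] := eqVneq v r; first by exists 0; apply: walk_nil.
  by exists (dist v); apply/walk_rev/tree_walk/tree_verts_reach.
Qed.

Lemma tree_keeps_walks x a :
  walk_le G x r a -> x \in verts tree_edges r /\ walk_le tree_edges x r a.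
Proof.
move=> wx; have rx : reach x by apply/reachP; exists a.
split; last exact: walk_mono (dist_min wx) (tree_walk rx).
have [->|xr] := eqVneq x r; first by rewrite /verts setU11.
rewrite /verts !inE; apply/orP; right; apply/orP; left.
by apply/imsetP; exists (x, parent x) => //; rewrite inE /= rx xr eqxx.
Qed.

End ShortestWalkTree.

Lemma in_tree (V : finType) (G : {set V * V}) (r : V) :
  exists A : {set V * V}, [/\ A \subset G, in_arborescence A r &
    forall x a, walk_le G x r a -> x \in verts A r /\ walk_le A x r a].
Proof.
have [reach [dist [reachP dist_walk dist_min]]] := distance_to G r.
exists (tree_edges G r reach dist); split.
- exact: tree_edges_sub.
- exact: tree_in_arborescence.
- by move=> x a; apply: tree_keeps_walks.
Qed.

Lemma out_tree (V : finType) (G : {set V * V}) (r : V) :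
  exists B : {set V * V}, [/\ B \subset G, out_arborescence B r &
    forall y b, walk_le G r y b -> y \in verts B r /\ walk_le B r y b].
Proof.
have [A [AG arb hw]] := in_tree (rev_edges G) r.
exists (rev_edges A); split => //.
- apply/subsetP => e; rewrite mem_rev_edges => /(subsetP AG).
  by rewrite mem_rev_edges; case: e.
- move=> y b /walk_rev /hw [yV w]; split; first by rewrite verts_rev.
  exact: walk_rev w.
Qed.

Lemma junction_tree_at (V : finType) (E G : {set V * V}) (r : V) :
  G \subset E ->
  exists J : jtree V, [/\ is_junction_tree E J, #|jin J :|: jout J| <= #|G| &
    forall x y a b d, walk_le G x r a -> walk_le G r y b -> a + b <= d ->
      jconnects J x y d].
Proof.
move=> GE; have [A [AG arbA hA]] := in_tree G r.
have [B [BG arbB hB]] := out_tree G r.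
exists (JTree r A B); split.
- by split => //=; apply: subset_trans GE.
- by apply: subset_leq_card; rewrite subUset AG BG.
- move=> x y a b d /hA[xA wxA] /hB[yB wyB] abd.
  by split => //=; exists a, b.
Qed.

Fixpoint walk_edges (V : finType) (x : V) (p : seq V) : {set V * V} :=
  if p is z :: p' then (x, z) |: walk_edges z p' else set0.

Lemma walk_edges_sub (V : finType) (G : {set V * V}) x p :
  path (erel G) x p -> walk_edges x p \subset G.
Proof.
elim: p x => [|z p IH] x /=; first by rewrite sub0set.
by move=> /andP[xz pz]; rewrite subUset sub1set -/(erel G x z) xz IH.
Qed.

Lemma walk_edges_card (V : finType) (x : V) p : #|walk_edges x p| <= size p.
Proof.
elim: p x => [|z p IH] x /=; first by rewrite cards0.
by rewrite cardsU1; have := IH z; case: (_ \notin _) => /=; lia.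
Qed.

Lemma walk_edges_walk (V : finType) (x : V) p :
  walk_le (walk_edges x p) x (last x p) (size p).
Proof.
exists p; split => //; elim: p x => [|z p IH] x //=.
by rewrite /erel setU11; apply: path_sub (IH z); apply: subsetUr.
Qed.

Lemma InP (T : eqType) (x : T) (l : seq T) : reflect (List.In x l) (x \in l).
Proof.
elim: l => [|y l IH] /=; first by constructor.
rewrite inE; apply: (iffP orP) => [[/eqP->|/IH]|[->|/IH]]; by [left | right].
Qed.

Lemma jcost_map (V : finType) (I : Type) (J : I -> jtree V) (l : seq I) :
  jcost [seq J i | i <- l] = \sum_(i <- l) #|jin (J i) :|: jout (J i)|.
Proof. by rewrite /jcost big_map. Qed.

Lemma jcost_cons (V : finType) (J : jtree V) sol :
  jcost (J :: sol) = #|jin J :|: jout J| + jcost sol.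
Proof. by rewrite /jcost big_cons. Qed.

Lemma sum_size_le_load (T : finType) (I : finType) (U : {set I})
  (P : I -> seq T) (H : {set T}) q :
  (forall i, uniq (P i) /\ {subset P i <= H}) ->
  (forall v, #|[set i in U | v \in P i]| <= q) ->
  \sum_(i in U) size (P i) <= #|H| * q.
Proof.
move=> hP hq.
have size_count i : size (P i) = \sum_(v in H) (v \in P i).
  have [u sub] := hP i.
  rewrite -(card_uniqP u) -sum1_card big_mkcond [RHS]big_mkcond /=.
  apply: eq_bigr => v _; case: (boolP (v \in P i)) => [/sub -> //|_].
  by case: (v \in H).
under eq_bigr => i _ do rewrite size_count.
rewrite exchange_big /= -sum_nat_const; apply: leq_sum => v _.
apply: leq_trans (hq v); rewrite -sum1_card [X in _ <= X]big_mkcond /= big_mkcond /=.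
by apply: leq_sum => i _; rewrite !inE; case: (i \in U); case: (v \in P i).
Qed.

Section GreedyCover.
Variables (V : finType) (E F : {set V * V}) (k : nat).
Variables (s t : 'I_k -> V) (d : 'I_k -> nat) (P : 'I_k -> seq V) (q : nat).
Hypothesis FE : F \subset E.
Hypothesis P_walk : forall i,
  [/\ path (erel F) (s i) (P i), last (s i) (P i) = t i & size (P i) <= d i].
Hypothesis P_uniq : forall i, uniq (P i).
Hypothesis q_gt0 : 0 < q.

Definition covers (sol : seq (jtree V)) (U : {set 'I_k}) : Prop :=
  (forall J, List.In J sol -> is_junction_tree E J) /\
  (forall i, i \in U -> exists J, List.In J sol /\ jconnects J (s i) (t i) (d i)).

Definition load (U : {set 'I_k}) (v : V) : nat := #|[set i in U | v \in P i]|.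

Lemma walk_tree i : exists J : jtree V, [/\ is_junction_tree E J,
  #|jin J :|: jout J| <= size (P i) & jconnects J (s i) (t i) (d i)].
Proof.
have [pP lP sP] := P_walk i.
have GE := subset_trans (walk_edges_sub pP) FE.
have [J [jJ cJ cnJ]] := junction_tree_at (s i) GE.
exists J; split => //; first exact: leq_trans cJ (walk_edges_card _ _).
apply: (cnJ _ _ 0 (size (P i))); [exact: walk_nil | | by rewrite add0n].
by rewrite -lP; apply: walk_edges_walk.
Qed.

(* If no vertex is heavy, serving every pair by its own walk costs at most
   q |F|, since the walks only visit heads of edges of F. *)
Lemma light_cover U : (forall v, load U v <= q) ->
  exists sol, covers sol U /\ jcost sol <= #|F| * q.
Proof.
move=> light; have [J hJ] := fin_all_exists walk_tree.
exists [seq J i | i <- enum U]; split; first split.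
- by move=> J' /List.in_map_iff[i [<- _]]; case: (hJ i).
- move=> i iU; exists (J i); split; last by case: (hJ i).
  by apply: List.in_map; apply/InP; rewrite mem_enum.
rewrite jcost_map big_enum /=.
apply: leq_trans (_ : \sum_(i in U) size (P i) <= _).
  by apply: leq_sum => i _; case: (hJ i).
have heads i : uniq (P i) /\ {subset P i <= [set e.2 | e in F]}.
  by split => //; case: (P_walk i) => pP _ _; apply: path_heads pP.
apply: leq_trans (sum_size_le_load heads light) _.
by rewrite leq_mul2r leq_imset_card orbT.
Qed.

Lemma heavy_tree v : exists J : jtree V,
  [/\ is_junction_tree E J, #|jin J :|: jout J| <= #|F| &
      forall i, v \in P i -> jconnects J (s i) (t i) (d i)].
Proof.
have [J [jJ cJ cnJ]] := junction_tree_at v FE.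
exists J; split => // i vP; have [pP lP sP] := P_walk i.
have [a [b [wa wb ab]]] := walk_split pP vP.
by rewrite lP in wb; apply: cnJ wa wb _; rewrite ab.
Qed.

(* Greedy: repeatedly take a root of load >= q (paying |F| <= |served| |F|/q),
   and finish with light_cover. Hence q cost <= |U| |F| + q^2 |F|. *)
Lemma greedy_cover U :
  exists sol, covers sol U /\ q * jcost sol <= #|U| * #|F| + q * q * #|F|.
Proof.
have [n] := ubnP #|U|; elim: n U => // n IH U ltUn.
have [/existsP[v heavy]|] := boolP [exists v, q <= load U v]; last first.
  rewrite negb_exists => /forallP light.
  have [sol [cov cost]] : exists sol, covers sol U /\ jcost sol <= #|F| * q.
    by apply: light_cover => v; have := light v; rewrite -ltnNge => /ltnW.
  by exists sol; split => //; rewrite mulnC; nia.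
pose W := [set i in U | v \in P i]; have heavyW : q <= #|W| := heavy.
have WU : W \subset U by apply/subsetP => i; rewrite inE => /andP[].
have cardU : #|W| + #|U :\: W| = #|U| by rewrite -(cardsID W U) (setIidPr WU).
have [sol [[trees conn] cost]] := IH (U :\: W) (ltac:(lia)).
have [J [jJ cJ cnJ]] := heavy_tree v.
exists (J :: sol); split; first split.
- by move=> J' /= [<-|/trees].
- move=> i iU; case: (boolP (i \in W)) => [|iW].
    by rewrite inE => /andP[_ /cnJ cJi]; exists J; split; first left.
  have [J' [inJ' cJ']] := conn i (ltac:(by rewrite inE iW iU)).
  by exists J'; split; first right.
- rewrite jcost_cons mulnDr.
  have := leq_mul (leqnn q) cJ; have := leq_mul heavyW (leqnn #|F|); nia.
Qed.

End GreedyCover.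

Lemma junction_solution_le (V : finType) (E F : {set V * V}) k
  (s t : 'I_k -> V) (d : 'I_k -> nat) q :
  0 < q -> k <= q * q -> spanner_feasible E s t d F ->
  exists sol, junction_solution E s t d sol /\ jcost sol <= 2 * q * #|F|.
Proof.
move=> q_gt0 kq [FE hw].
have [P hP] := fin_all_exists (fun i => walk_uniq (hw i)).
have P_walk i : [/\ path (erel F) (s i) (P i), last (s i) (P i) = t i
                  & size (P i) <= d i] by case: (hP i).
have P_uniq i : uniq (P i) by case: (hP i).
have [sol [[trees conn] cost]] := greedy_cover FE P_walk P_uniq q_gt0 [set: 'I_k].
exists sol; split; first by split => // i; apply: conn; rewrite inE.
rewrite cardsT card_ord in cost; rewrite -(leq_pmul2l q_gt0).
by apply: leq_trans cost _; have := leq_mul kq (leqnn #|F|); nia.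
Qed.

Lemma ceil_sqrt k : 0 < k -> exists q, [/\ 0 < q, k <= q * q & q * q <= 4 * k].
Proof.
move=> k_gt0; have ex : exists q, k <= q * q by exists k; nia.
case: (ex_minnP ex) => q kq qmin; exists q; split => //.
  by rewrite lt0n; apply/eqP => q0; rewrite q0 in kq; lia.
have : (q - 1) * (q - 1) < k by rewrite ltnNge; apply/negP => /qmin; lia.
nia.
Qed.

Section RealBound.
Local Open Scope R_scope.

Lemma real_cost_bound (q k f c : nat) :
  (q * q <= 4 * k)%N -> (c <= 2 * q * f)%N ->
  INR c <= 4 * sqrt (INR k) * INR f.
Proof.
move=> /leP /le_INR qk /leP /le_INR cq; rewrite !mult_INR in qk cq.
have four : INR 4 = 4 by rewrite /=; lra.
have two : INR 2 = 2 by rewrite /=; lra.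
rewrite four in qk; rewrite two in cq.
have sk := sqrt_sqrt (INR k) (pos_INR k).
have := sqrt_pos (INR k); have := pos_INR q; have := pos_INR f => f0 q0 s0.
have q_le : INR q <= 2 * sqrt (INR k) by nra.
nra.
Qed.

End RealBound.

Theorem lemma4p2 :
  exists C : R, Rlt 0 C /\
  forall (V : finType) (E : {set V * V}) (k : nat)
         (s t : 'I_k -> V) (d : 'I_k -> nat),
    (forall i, walk_le E (s i) (t i) (d i)) ->
    forall F : {set V * V}, spanner_feasible E s t d F ->
    exists sol : seq (jtree V),
      junction_solution E s t d sol /\
      Rle (INR (jcost sol)) (Rmult (Rmult C (sqrt (INR k))) (INR #|F|)).
Proof.
exists (4 : R); split; first lra.
move=> V E k s t d _ F feasible.
have [k0 | k_gt0] := posnP k.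
  subst k; exists [::]; split; first by split => // -[].
  rewrite /jcost big_nil /= sqrt_0; lra.
have [q [q_gt0 kq qk]] := ceil_sqrt k_gt0.
have [sol [sol_ok cost]] := junction_solution_le q_gt0 kq feasible.
by exists sol; split => //; apply: real_cost_bound qk cost.
Qed.
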